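(* Adopt the following setting with $n_p=2$. Let $P\subset\mathbb{R}^{2}$ be convex and compact, $\mathbf{f}:\mathbb{R}^{n_x}\times\mathbb{R}^2\to\mathbb{R}^{n_x}$, $Q\subset P$ the nonempty set of $\mathbf{p}\in P$ for which $\mathbf{f}(\mathbf{z},\mathbf{p})=\mathbf{0}$ has a solution, $\mathbf{x}:Q\to\mathbb{R}^{n_x}$ with $\mathbf{f}(\mathbf{x}(\mathbf{p}),\mathbf{p})=\mathbf{0}$, and $X=[\mathbf{x}^L,\mathbf{x}^U]$ with $\mathbf{x}(\mathbf{p})\in X$ for $\mathbf{p}\in Q$. Write $\mathbf{f}=(\tilde{\mathbf{f}},\mathbf{h})$ with $\mathbf{h}$ affine (values in $\mathbb{R}^{n_h}$) and no component of $\tilde{\mathbf{f}}$ affine; for each $\tilde i$ let $\tilde f_{\tilde i}^{cv}=\max_j\tilde f_{\tilde i}^{cv,j}$, $\tilde f_{\tilde i}^{cc}=\min_j\tilde f_{\tilde i}^{cc,j}$ be convex/concave relaxations of $\tilde f_{\tilde i}$ on $X\times P$ with finitely many continuously differentiable convex pieces $\tilde f_{\tilde i}^{cv,j}$ and concave pieces $\tilde f_{\tilde i}^{cc,j}$. Let $\mathbf{g}$ collect all $\tilde f_{\tilde i}^{cv,j}$, $-\tilde f_{\tilde i}^{cc,j}$, $\mathbf{x}^L-\boldsymbol\xi$ and $\boldsymbol\xi-\mathbf{x}^U$. Fix $i$ and define $x_i^{cv}(\mathbf{p}):=\min\{\xi_i:\boldsymbol\xi\in\mathbb{R}^{n_x},\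 \mathbf{h}(\boldsymbol\xi,\mathbf{p})=\mathbf{0},\ \mathbf{g}(\boldsymbol\xi,\mathbf{p})\le\mathbf{0}\}$. Let $\hat{\mathbf{p}}\in\mathrm{int}(Q)$, suppose the gradients $\nabla_{\boldsymbol\xi}h_k$ ($k=1,\dots,n_h$) are linearly independent, and suppose there is a neighborhood $N\subset Q$ of $\hat{\mathbf{p}}$ such that each $\mathbf{p}\in N$ admits $\boldsymbol\xi_{\mathbf{p}}\in X$ with $\mathbf{h}(\boldsymbol\xi_{\mathbf{p}},\mathbf{p})=\mathbf{0}$ and $\mathbf{g}(\boldsymbol\xi_{\mathbf{p}},\mathbf{p})<\mathbf{0}$. Then $$\frac12\begin{bmatrix}[x_i^{cv}]'(\hat{\mathbf{p}};\mathbf{e}^{(1)})-[x_i^{cv}]'(\hat{\mathbf{p}};-\mathbf{e}^{(1)})\\ [x_i^{cv}]'(\hat{\mathbf{p}};\mathbf{e}^{(2)})-[x_i^{cv}]'(\hat{\mathbf{p}};-\mathbf{e}^{(2)})\end{bmatrix}$$ is a subgradient of $x_i^{cv}$ at $\hat{\mathbf{p}}$.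
   Context: $\mathbf{e}^{(1)},\mathbf{e}^{(2)}$ are the unit coordinate vectors in $\mathbb{R}^2$. Inequalities between vectors are componentwise. Convex (concave) relaxation of $\phi$ on $X\times P$: a convex function $\le\phi$ (concave function $\ge\phi$) there. $[\phi]'(\mathbf{p};\mathbf{d})=\lim_{\alpha\downarrow0}(\phi(\mathbf{p}+\alpha\mathbf{d})-\phi(\mathbf{p}))/\alpha$. A subgradient of the convex function $x_i^{cv}$ at $\hat{\mathbf{p}}$ is $\mathbf{s}$ with $x_i^{cv}(\boldsymbol\eta)\ge x_i^{cv}(\hat{\mathbf{p}})+\langle\mathbf{s},\boldsymbol\eta-\hat{\mathbf{p}}\rangle$ for all $\boldsymbol\eta$ in the domain. *)

From HB Require Import structures.
From mathcomp Require Import all_boot all_order all_algebra.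
From mathcomp Require Import all_classical all_reals all_analysis.
Set Implicit Arguments. Unset Strict Implicit. Unset Printing Implicit Defensive.
Import Order.TTheory GRing.Theory Num.Theory.
Import numFieldNormedType.Exports.
Local Open Scope classical_set_scope.
Local Open Scope ring_scope.

Section Defs.
Variable R : realType.

Definition inbox (n : nat) (xL xU z : 'rV[R]_n) : Prop :=
  forall j, xL 0 j <= z 0 j <= xU 0 j.

Definition inbox_strict (n : nat) (xL xU z : 'rV[R]_n) : Prop :=
  forall j, xL 0 j < z 0 j < xU 0 j.

Definition convex_setR (n : nat) (S : set 'rV[R]_n) : Prop :=
  forall a b t, S a -> S b -> 0 <= t <= 1 -> S (t *: a + (1 - t) *: b).

Definition convex_on_XP (nx : nat) (xL xU : 'rV[R]_nx) (P : set 'rV[R]_2)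
  (phi : 'rV[R]_nx -> 'rV[R]_2 -> R) : Prop :=
  forall z1 p1 z2 p2 t, inbox xL xU z1 -> P p1 -> inbox xL xU z2 -> P p2 ->
    0 <= t <= 1 ->
    phi (t *: z1 + (1 - t) *: z2) (t *: p1 + (1 - t) *: p2)
      <= t * phi z1 p1 + (1 - t) * phi z2 p2.

Definition concave_on_XP (nx : nat) (xL xU : 'rV[R]_nx) (P : set 'rV[R]_2)
  (phi : 'rV[R]_nx -> 'rV[R]_2 -> R) : Prop :=
  convex_on_XP xL xU P (fun z p => - phi z p).

Definition C1 (nx : nat) (phi : 'rV[R]_nx -> 'rV[R]_2 -> R) : Prop :=
  let F := fun zp : 'rV[R]_nx * 'rV[R]_2 => phi zp.1 zp.2 in
  forall v, (forall zp, derivable F zp v) /\ continuous (fun zp => 'D_v F zp).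

Definition affine_fun (nx : nat) (phi : 'rV[R]_nx -> 'rV[R]_2 -> R) : Prop :=
  exists (a : 'rV[R]_nx) (b : 'rV[R]_2) (c : R),
    forall z p, phi z p = (z *m a^T) 0 0 + (p *m b^T) 0 0 + c.

(* feasible set of the relaxed problem defining x_i^cv at p:
   h(xi,p) = 0 and g(xi,p) <= 0, where g collects the convex pieces fcv,
   the negated concave pieces -fcc, xL - xi and xi - xU *)
Definition feasible (nx nf nh : nat) (xL xU : 'rV[R]_nx)
  (h : 'rV[R]_nx -> 'rV[R]_2 -> 'rV[R]_nh)
  (ncv ncc : 'I_nf -> nat)
  (fcv : forall it : 'I_nf, 'I_(ncv it) -> 'rV[R]_nx -> 'rV[R]_2 -> R)
  (fcc : forall it : 'I_nf, 'I_(ncc it) -> 'rV[R]_nx -> 'rV[R]_2 -> R)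
  (p : 'rV[R]_2) : set 'rV[R]_nx :=
  [set xi | h xi p = 0 /\
     (forall it j, fcv it j xi p <= 0) /\
     (forall it j, - fcc it j xi p <= 0) /\
     (forall j, xL 0 j - xi 0 j <= 0) /\
     (forall j, xi 0 j - xU 0 j <= 0)].

Definition xcv (nx nf nh : nat) (xL xU : 'rV[R]_nx)
  (h : 'rV[R]_nx -> 'rV[R]_2 -> 'rV[R]_nh)
  (ncv ncc : 'I_nf -> nat)
  (fcv : forall it : 'I_nf, 'I_(ncv it) -> 'rV[R]_nx -> 'rV[R]_2 -> R)
  (fcc : forall it : 'I_nf, 'I_(ncc it) -> 'rV[R]_nx -> 'rV[R]_2 -> R)
  (i : 'I_nx) (p : 'rV[R]_2) : R :=
  inf [set xi 0 i | xi in feasible xL xU h fcv fcc p].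

Definition dirder_is (phi : 'rV[R]_2 -> R) (p d : 'rV[R]_2) (l : R) : Prop :=
  (fun a : R => (phi (p + a *: d) - phi p) / a) a @[a --> 0^'+] --> l.

Definition e1 : 'rV[R]_2 := delta_mx 0 0.
Definition e2 : 'rV[R]_2 := delta_mx 0 ord_max.

Definition dotv (n : nat) (u v : 'rV[R]_n) : R := \sum_(j < n) u 0 j * v 0 j.

End Defs.

From HB Require Import structures.
From mathcomp Require Import all_boot all_order all_algebra.
From mathcomp Require Import all_classical all_reals all_analysis.
From mathcomp Require Import ring lra.
Import Order.TTheory GRing.Theory Num.Theory.
Import numFieldNormedType.Exports.
Local Open Scope classical_set_scope.
Local Open Scope ring_scope.
Set Implicit Arguments. Unset Strict Implicit.

(* The feasible sets of the relaxed problem depend jointly convexly on p (h is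
   affine and the pieces of g are convex in (xi, p)), so their infimum x_i^cv
   is convex on the parameters where the problem is feasible, which by the
   Slater condition form a neighbourhood of phat.  At an interior point, a
   convex f has one-sided directional derivatives f'(p; w), positively
   homogeneous and subadditive in w, with f'(p; q - p) <= f q - f p.  Writing
   q - p = a e1 + b e2, subadditivity gives f'(p; a e1) - f'(p; -b e2) <=
   f q - f p, and likewise with the axes exchanged; adding the two and using
   homogeneity is exactly the subgradient inequality for the compass vector.
   This pairing of the two axes is what restricts the argument to n_p = 2. *)

Definition convex_on (R : realType) (V : lmodType R) (D : set V) (f : V -> R) :=
  forall a b t, D a -> D b -> 0 <= t <= 1 ->
    f (t *: a + (1 - t) *: b) <= t * f a + (1 - t) * f b.

Section DirectionalDerivative.
Variables (R : realType) (V : normedModType R) (D : set V) (f : V -> R).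
Hypothesis f_convex : convex_on D f.

Definition diffq (p w : V) (t : R) := (f (p + t *: w) - f p) / t.

Lemma diffq_nondecreasing p w s t : D p -> D (p + t *: w) -> 0 < s <= t ->
  diffq p w s <= diffq p w t.
Proof.
move=> Dp Dt /andP[s0 st]; have t0 : 0 < t by apply: lt_le_trans st.
have st01 : 0 <= s / t <= 1.
  by rewrite divr_ge0 ?(ltW s0) ?(ltW t0) // ler_pdivrMr // mul1r.
have := f_convex Dt Dp st01.
have -> : s / t *: (p + t *: w) + (1 - s / t) *: p = p + s *: w.
  by rewrite scalerDr scalerA divfK ?gt_eqF // scalerBl scale1r addrC addrA subrK.
move=> H; rewrite /diffq ler_pdivrMr //.
have -> : (f (p + t *: w) - f p) / t * s = s / t * f (p + t *: w) - s / t * f p.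
  by field; rewrite gt_eqF.
lra.
Qed.

Lemma diffq_opp_le p w s t : D (p - s *: w) -> D (p + t *: w) -> 0 < s -> 0 < t ->
  - diffq p (- w) s <= diffq p w t.
Proof.
move=> Ds Dt s0 t0; have st0 : 0 < s + t := addr_gt0 s0 t0.
have l01 : 0 <= s / (s + t) <= 1.
  by rewrite divr_ge0 ?(ltW s0) ?(ltW st0) // ler_pdivrMr // mul1r lerDl ltW.
have := f_convex Dt Ds l01.
have -> : s / (s + t) *: (p + t *: w) + (1 - s / (s + t)) *: (p - s *: w) = p.
  have -> : 1 - s / (s + t) = t / (s + t) by field; rewrite gt_eqF.
  rewrite scalerDr scalerBr !scalerA.
  have -> : t / (s + t) * s = s / (s + t) * t.
    by rewrite mulrAC [RHS]mulrAC [t * s]mulrC.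
  by rewrite addrACA subrr addr0 -scalerDl -mulrDl divff ?gt_eqF // scale1r.
rewrite /diffq scalerN.
set dA := (f (p + t *: w) - f p) / t; set dB := (f (p - s *: w) - f p) / s.
have -> : f (p + t *: w) = f p + t * dA.
  by rewrite /dA [t * _]mulrC divfK ?gt_eqF // [RHS]addrC subrK.
have -> : f (p - s *: w) = f p + s * dB.
  by rewrite /dB [s * _]mulrC divfK ?gt_eqF // [RHS]addrC subrK.
move=> H; have : 0 <= s * t / (s + t) * (dA + dB).
  have -> : s * t / (s + t) * (dA + dB) =
      s / (s + t) * (f p + t * dA) + (1 - s / (s + t)) * (f p + s * dB) - f p.
    by field; rewrite gt_eqF.
  by rewrite subr_ge0.
by rewrite pmulr_rge0 ?divr_gt0 ?mulr_gt0 //; lra.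
Qed.

Variable p : V.
Hypothesis D_nbhs : nbhs p D.

Lemma line_in_nbhs w : exists2 d : R, 0 < d & forall t, `|t| < d -> D (p + t *: w).
Proof.
have line_cvg : (fun t : R => p + t *: w) t @[t --> 0] --> p.
  rewrite -[p in _ --> p]addr0; apply: cvgD; first exact: cvg_cst.
  by rewrite -(scale0r w); apply: cvgZ; [exact: cvg_id | exact: cvg_cst].
have /nbhs_ballP[d d0 Dd] := line_cvg D D_nbhs.
by exists d => // t td; apply: Dd; rewrite -ball_normE /ball_ /= sub0r normrN.
Qed.

Lemma is_cvg_diffq w : cvg (diffq p w t @[t --> 0^'+]).
Proof.
have [d d0 Dline] := line_in_nbhs w.
have Dp : D p := nbhs_singleton D_nbhs.
apply: nondecreasing_at_right_is_cvgr.
  near=> b => s t; rewrite !in_itv /= => /andP[s0 _] /andP[t0 tb] st.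
  apply: diffq_nondecreasing => //; last by rewrite s0.
  apply: Dline; rewrite gtr0_norm //; apply: lt_trans tb _.
  by near: b; exact: nbhs_right_lt.
near=> b; exists (- diffq p (- w) (d / 2)) => _ [t + <-].
rewrite /= in_itv /= => /andP[t0 tb].
apply: diffq_opp_le => //.
- by rewrite -scaleNr; apply: Dline; rewrite normrN gtr0_norm ?divr_gt0 //; lra.
- apply: Dline; rewrite gtr0_norm //; apply: lt_trans tb _.
  by near: b; exact: nbhs_right_lt.
- by rewrite divr_gt0.
Unshelve. all: by end_near.
Qed.

Definition dirder w := lim (diffq p w t @[t --> 0^'+]).

Lemma diffq_cvg w : diffq p w t @[t --> 0^'+] --> dirder w.
Proof. exact: is_cvg_diffq. Qed.

Lemma dirder_le_diffq w t : 0 < t -> D (p + t *: w) -> dirder w <= diffq p w t.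
Proof.
move=> t0 Dt; apply: limr_le; first exact: is_cvg_diffq.
near=> s.
apply: diffq_nondecreasing (nbhs_singleton D_nbhs) Dt _.
apply/andP; split; near: s; [exact: nbhs_right_gt | exact: nbhs_right_le].
Unshelve. all: by end_near.
Qed.

Lemma dirder_le_sub q : D q -> dirder (q - p) <= f q - f p.
Proof.
move=> Dq; have := @dirder_le_diffq (q - p) 1 ltr01.
by rewrite /diffq scale1r subrKC divr1; apply.
Qed.

Lemma dirderZ_le c w : 0 < c -> dirder (c *: w) <= c * dirder w.
Proof.
move=> c0; rewrite mulrC -ler_pdivrMr //.
have [d d0 Dline] := line_in_nbhs w.
apply: limr_ge; first exact: is_cvg_diffq.
near=> s.
have s0 : 0 < s by near: s; exact: nbhs_right_gt.
rewrite ler_pdivrMr // mulrC.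
have -> : c * diffq p w s = diffq p (c *: w) (s / c).
  by rewrite /diffq scalerA divfK ?gt_eqF // invf_div mulrCA.
apply: dirder_le_diffq; first by rewrite divr_gt0.
rewrite scalerA divfK ?gt_eqF //; apply: Dline.
rewrite gtr0_norm //; near: s; exact: nbhs_right_lt.
Unshelve. all: by end_near.
Qed.

Lemma dirderZ c w : 0 < c -> dirder (c *: w) = c * dirder w.
Proof.
move=> c0; apply/eqP; rewrite eq_le dirderZ_le //=.
rewrite -ler_pdivlMl //; apply: le_trans (dirderZ_le _ _); last by rewrite invr_gt0.
by rewrite scalerA mulVf ?gt_eqF // scale1r.
Qed.

Lemma dirderD u v : dirder (u + v) <= dirder u + dirder v.
Proof.
have [du du0 Du] := line_in_nbhs u; have [dv dv0 Dv] := line_in_nbhs v.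
have -> : u + v = 2 *: (2^-1 *: (u + v)) by rewrite scalerA divff ?pnatr_eq0 // scale1r.
rewrite dirderZ ?ltr0n // -ler_pdivlMl ?ltr0n //.
have mean_cvg : 2^-1 * (diffq p u t + diffq p v t) @[t --> 0^'+]
    --> 2^-1 * (dirder u + dirder v).
  by apply: cvgM; [exact: cvg_cst | apply: cvgD; exact: diffq_cvg].
apply: (ler_cvg_to (@diffq_cvg _) mean_cvg).
near=> t.
have t0 : 0 < t by near: t; exact: nbhs_right_gt.
have Dtu : D (p + t *: u).
  by apply: Du; rewrite gtr0_norm //; near: t; exact: nbhs_right_lt.
have Dtv : D (p + t *: v).
  by apply: Dv; rewrite gtr0_norm //; near: t; exact: nbhs_right_lt.
have half01 : 0 <= (2^-1 : R) <= 1 by apply/andP; split; lra.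
have := f_convex Dtu Dtv half01.
have -> : 2^-1 *: (p + t *: u) + (1 - 2^-1) *: (p + t *: v)
    = p + t *: (2^-1 *: (u + v)).
  have -> : 1 - 2^-1 = 2^-1 :> R by lra.
  rewrite !scalerDr !scalerA [t * _]mulrC addrACA -scalerDl.
  have -> : 2^-1 + 2^-1 = 1 :> R by lra.
  by rewrite scale1r.
move=> mid_le; rewrite /diffq -mulrDl mulrA; apply: ler_wpM2r; last by lra.
by rewrite invr_ge0 ltW.
Unshelve. all: by end_near.
Qed.

Definition dirder_odd w := dirder w - dirder (- w).

Lemma dirder_oddZ y w : dirder_odd (y *: w) = y * dirder_odd w.
Proof.
rewrite /dirder_odd; case: (ltrgtP y 0) => [y0|y0|->].
- have -> : y *: w = (- y) *: (- w) by rewrite scalerN scaleNr opprK.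
  by rewrite -scalerN opprK !dirderZ ?oppr_gt0 //; ring.
- by rewrite -scalerN !dirderZ // mulrBr.
- by rewrite scale0r oppr0 subrr mul0r.
Qed.

Lemma dirder_sub_le q u v : D q -> q - p = u + v ->
  dirder u - dirder (- v) <= f q - f p.
Proof.
move=> Dq quv; have := dirderD (u + v) (- v); rewrite addrK -quv.
by have := dirder_le_sub Dq; lra.
Qed.

End DirectionalDerivative.

Lemma rV2_decomp (R : realType) (d : 'rV[R]_2) :
  d = d 0 0 *: e1 R + d 0 ord_max *: e2 R.
Proof.
apply/rowP => j; rewrite !mxE /=.
case: j => [[|[|//]] lt_j2] /=.
  by rewrite mulr1 mulr0 addr0; congr (d 0 _); apply: val_inj.
by rewrite mulr1 mulr0 add0r; congr (d 0 _); apply: val_inj.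
Qed.

Lemma dotv_rV2 (R : realType) (a b : R) (d : 'rV[R]_2) :
  dotv (2^-1 *: \row_(j < 2) (if j == 0 then a else b)) d
  = 2^-1 * (d 0 0 * a + d 0 ord_max * b).
Proof.
rewrite /dotv big_ord_recr big_ord_recr big_ord0 /= !mxE /= add0r mulrDr.
have -> : widen_ord (leqnSn 1) ord_max = 0 :> 'I_2 by apply: val_inj.
by rewrite -!mulrA [a * _]mulrC [b * _]mulrC.
Qed.

Lemma compass_subgradient (R : realType) (D : set 'rV[R]_2) (f : 'rV[R]_2 -> R)
    (p q : 'rV[R]_2) : convex_on D f -> nbhs p D -> D q ->
  let s := 2^-1 *: \row_(j < 2)
    (if j == 0 then dirder_odd f p (e1 R) else dirder_odd f p (e2 R)) in
  f p + dotv s (q - p) <= f q.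
Proof.
move=> f_convex D_nbhs Dq /=; rewrite dotv_rV2 -!(dirder_oddZ f_convex D_nbhs).
have qpE := rV2_decomp (q - p).
have := dirder_sub_le f_convex D_nbhs Dq qpE.
have := dirder_sub_le f_convex D_nbhs Dq (etrans qpE (addrC _ _)).
rewrite /dirder_odd; lra.
Qed.

Lemma inf_convex_comb_le (R : realType) (S1 S2 S3 : set R) (t : R) :
  has_inf S1 -> has_inf S2 -> has_lbound S3 -> 0 <= t <= 1 ->
  (forall x1 x2, S1 x1 -> S2 x2 -> S3 (t * x1 + (1 - t) * x2)) ->
  inf S3 <= t * inf S1 + (1 - t) * inf S2.
Proof.
move=> S1inf S2inf S3lb /andP[t0 t1] S3comb.
apply/ler_addgt0Pr => e e0.
have [x1 S1x1 x1_lt] := inf_adherent e0 S1inf.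
have [x2 S2x2 x2_lt] := inf_adherent e0 S2inf.
have := ge_inf S3lb (S3comb _ _ S1x1 S2x2).
have : t * x1 <= t * (inf S1 + e) by rewrite ler_wpM2l // ltW.
have : (1 - t) * x2 <= (1 - t) * (inf S2 + e) by rewrite ler_wpM2l ?subr_ge0 // ltW.
lra.
Qed.

Section RelaxedProblem.
Variables (R : realType) (nx nf nh : nat) (P : set 'rV[R]_2) (xL xU : 'rV[R]_nx)
  (h : 'rV[R]_nx -> 'rV[R]_2 -> 'rV[R]_nh) (ncv ncc : 'I_nf -> nat)
  (fcv : forall it : 'I_nf, 'I_(ncv it) -> 'rV[R]_nx -> 'rV[R]_2 -> R)
  (fcc : forall it : 'I_nf, 'I_(ncc it) -> 'rV[R]_nx -> 'rV[R]_2 -> R)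
  (A : 'M[R]_(nh, nx)) (B : 'M[R]_(nh, 2)) (c : 'rV[R]_nh).
Hypothesis hE : forall z p, h z p = z *m A^T + p *m B^T + c.
Hypothesis fcv_convex :
  forall it (j : 'I_(ncv it)), convex_on_XP xL xU P (@fcv it j).
Hypothesis fcc_concave :
  forall it (j : 'I_(ncc it)), concave_on_XP xL xU P (@fcc it j).

Local Notation feasible := (feasible xL xU h fcv fcc).

Lemma feasible_inbox p z : feasible p z -> inbox xL xU z.
Proof.
move=> [_ [_ [_ [zL zU]]]] j.
by rewrite -subr_le0 (zL j) -[z 0 j <= _]subr_le0 (zU j).
Qed.

Lemma h_convex_comb z1 z2 p1 p2 t :
  h (t *: z1 + (1 - t) *: z2) (t *: p1 + (1 - t) *: p2)
  = t *: h z1 p1 + (1 - t) *: h z2 p2.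
Proof.
rewrite !hE !mulmxDl -!scalemxAl; apply/rowP => j; rewrite !mxE; ring.
Qed.

Lemma feasible_convex_comb p1 p2 z1 z2 t : P p1 -> P p2 ->
  feasible p1 z1 -> feasible p2 z2 -> 0 <= t <= 1 ->
  feasible (t *: p1 + (1 - t) *: p2) (t *: z1 + (1 - t) *: z2).
Proof.
move=> P1 P2 F1 F2 t01.
have B1 := feasible_inbox F1; have B2 := feasible_inbox F2.
case: F1 => [h1 [cv1 [cc1 [L1 U1]]]]; case: F2 => [h2 [cv2 [cc2 [L2 U2]]]].
have /andP[t0 t1] := t01.
split; first by rewrite h_convex_comb h1 h2 !scaler0 addr0.
split.
  move=> it j; apply: le_trans (fcv_convex j B1 P1 B2 P2 t01) _.
  by have := cv1 it j; have := cv2 it j; nra.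
split.
  move=> it j; apply: le_trans (fcc_concave j B1 P1 B2 P2 t01) _.
  by have := cc1 it j; have := cc2 it j; nra.
split=> j; rewrite !mxE.
  by have := L1 j; have := L2 j; nra.
by have := U1 j; have := U2 j; nra.
Qed.

Lemma xcv_convex i :
  convex_on [set q | P q /\ feasible q !=set0] (xcv xL xU h fcv fcc i).
Proof.
move=> a b t [Pa [za Fa]] [Pb [zb Fb]] t01.
have xcv_lb q : has_lbound [set z 0 i | z in feasible q].
  by exists (xL 0 i) => _ [z /feasible_inbox/(_ i)/andP[zL _] <-].
apply: inf_convex_comb_le => //.
- by split; [exists (za 0 i), za | exact: xcv_lb].
- by split; [exists (zb 0 i), zb | exact: xcv_lb].
- move=> _ _ [z1 F1 <-] [z2 F2 <-].
  exists (t *: z1 + (1 - t) *: z2); first exact: feasible_convex_comb.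
  by rewrite !mxE.
Qed.

End RelaxedProblem.

Theorem proposition5p3 (R : realType) (nx nf nh : nat)
  (P : set 'rV[R]_2)
  (ftil : 'I_nf -> 'rV[R]_nx -> 'rV[R]_2 -> R)
  (h : 'rV[R]_nx -> 'rV[R]_2 -> 'rV[R]_nh)
  (Q : set 'rV[R]_2)
  (x : 'rV[R]_2 -> 'rV[R]_nx)
  (xL xU : 'rV[R]_nx)
  (ncv ncc : 'I_nf -> nat)
  (fcv : forall it : 'I_nf, 'I_(ncv it) -> 'rV[R]_nx -> 'rV[R]_2 -> R)
  (fcc : forall it : 'I_nf, 'I_(ncc it) -> 'rV[R]_nx -> 'rV[R]_2 -> R)
  (i : 'I_nx) (phat : 'rV[R]_2) :
  (* n_x equations: f = (ftil, h) *)
  nx = (nf + nh)%N ->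
  convex_setR P -> compact P ->
  (* Q = { p in P | f(z,p) = 0 has a solution }, nonempty *)
  Q = [set p | P p /\ exists z, (forall it, ftil it z p = 0) /\ h z p = 0] ->
  Q !=set0 ->
  (* x : Q -> R^nx solves f(x(p),p) = 0 and lies in X = [xL,xU] *)
  (forall p, Q p -> (forall it, ftil it (x p) p = 0) /\ h (x p) p = 0) ->
  (forall p, Q p -> inbox xL xU (x p)) ->
  (* h affine, with linearly independent gradients grad_xi h_k (rows of A) *)
  (exists (A : 'M[R]_(nh, nx)) (B : 'M[R]_(nh, 2)) (c : 'rV[R]_nh),
     (forall z p, h z p = z *m A^T + p *m B^T + c) /\ row_free A) ->
  (* no component of ftil is affine *)
  (forall it, ~ affine_fun (ftil it)) ->
  (* finitely many (at least one) C^1 convex / concave pieces *)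
  (forall it, (0 < ncv it)%N) -> (forall it, (0 < ncc it)%N) ->
  (forall it j, C1 (fcv it j) /\ convex_on_XP xL xU P (fcv it j)) ->
  (forall it j, C1 (fcc it j) /\ concave_on_XP xL xU P (fcc it j)) ->
  (* max_j fcv^j and min_j fcc^j are relaxations of ftil on X x P *)
  (forall it z p, inbox xL xU z -> P p ->
     (forall j, fcv it j z p <= ftil it z p) /\
     (forall j, ftil it z p <= fcc it j z p)) ->
  (* phat in int(Q) *)
  (interior Q) phat ->
  (* Slater-type condition on a neighbourhood N of phat with N in Q *)
  (exists N : set 'rV[R]_2, nbhs phat N /\ N `<=` Q /\
     forall p, N p -> exists xi, inbox xL xU xi /\ h xi p = 0 /\
       (forall it j, fcv it j xi p < 0) /\
       (forall it j, - fcc it j xi p < 0) /\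
       (forall j, xL 0 j - xi 0 j < 0) /\
       (forall j, xi 0 j - xU 0 j < 0)) ->
  let phi := xcv xL xU h fcv fcc i in
  exists d1p d1m d2p d2m : R,
    dirder_is phi phat (e1 R) d1p /\ dirder_is phi phat (- e1 R) d1m /\
    dirder_is phi phat (e2 R) d2p /\ dirder_is phi phat (- e2 R) d2m /\
    let s : 'rV[R]_2 := 2^-1 *: \row_(j < 2) (if j == 0 then d1p - d1m else d2p - d2m) in
    forall eta, P eta -> feasible xL xU h fcv fcc eta !=set0 ->
      phi phat + dotv s (eta - phat) <= phi eta.
Proof.
move=> _ _ _ QE _ _ _ [A [B [c [hE _]]]] _ _ _ fcvH fccH _ _.
move=> [N [N_nbhs [NQ slater]]] phi.
set D := [set q | P q /\ feasible xL xU h fcv fcc q !=set0].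
have phi_convex : convex_on D phi.
  exact: (xcv_convex hE (fun it j => (fcvH it j).2) (fun it j => (fccH it j).2)).
have D_nbhs : nbhs phat D.
  apply: filterS N_nbhs => q Nq; split; first by move: (NQ q Nq); rewrite QE => -[].
  have [xi [_ [hxi [cvxi [ccxi [Lxi Uxi]]]]]] := slater q Nq.
  by exists xi; do !split => // *; apply: ltW.
exists (dirder phi phat (e1 R)), (dirder phi phat (- e1 R)),
  (dirder phi phat (e2 R)), (dirder phi phat (- e2 R)).
do 4 (split; first exact: (diffq_cvg phi_convex D_nbhs)).
move=> /= eta P_eta F_eta.
exact: compass_subgradient phi_convex D_nbhs (conj P_eta F_eta).
Qed.
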